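(* Let $V=\{a_1,\ldots,a_n\}$ be a set of propositional variables, $\mathcal{R}$ be a set of transition rules on $V$, $F$ be a CTL formula and let $s \models_{\mathcal{R}} F$ denote that $F$ holds at state $s$ in the transition system defined by $\mathcal{R}$. Then $s \models_{\mathcal{R}} F$ iff the sequent $\vdash \llbracket s\rrbracket, [\![F]\!]_{\mathcal{R}}$ is provable in $\mu$MALL.
   Context: $\mu$MALL is multiplicative-additive linear logic extended with least ($\mu$) and greatest ($\nu$) fixed points, with the unfolding rule for $\mu$ and the (co)induction rule for $\nu$ using an invariant. Below $\&$ is additive conjunction (with), $\bigoplus$/$\oplus$ additive disjunction, $\otimes$ multiplicative conjunction, and ⅋ multiplicative disjunction (par). A state $s$ over $V$ is a valuation $V\to\{\mathrm{true},\mathrm{false}\}$, written as a conjunction $p_1(a_1)\wedge\cdots\wedge p_n(a_n)$ with each $p_i$ either ''present'' ($s(a_i)=\mathrm{true}$) or ''absent'' ($s(a_i)=\mathrm{false}$). Transition rules have the form $r: s\to s'$, enabling the transition from $s$ to $s'$; the transition system is assumed serial. CTL formulas: $F ::= p \mid F\wedge F\mid F\vee F\mid \mathbf{Q}\mathsf{X}F\mid \mathbf{Q}\mathsf{F}F\mid \mathbf{Q}\mathsf{G}F\mid \mathbf{Q}[F\,\mathsf{U}\,F]$ with $\mathbf{Q}\in\{\mathsf{A},\mathsf{E}\}$ and $p$ a state formula. Encoding: $\llbracket \text{present}(a_i)\rrbracket = a_i$, $\llbracket \text{absent}(a_i)\rrbracket = a_i^\perp$; $\llbracket s\rrbracket =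 \llbracket p_1(a_1)\rrbracket^\perp$ ⅋ $\cdots$ ⅋ $\llbracket p_n(a_n)\rrbracket^\perp$; $\mathrm{pos}(s) = \llbracket p_1(a_1)\rrbracket\otimes\cdots\otimes\llbracket p_n(a_n)\rrbracket = \llbracket s\rrbracket^\perp$; $\mathrm{neg}(s) = (\llbracket p_1(a_1)\rrbracket^\perp\otimes\top)\oplus\cdots\oplus(\llbracket p_n(a_n)\rrbracket^\perp\otimes\top)$; a state formula $p$ is encoded as $\mathrm{pos}(p)$ (variables not occurring in $p$ giving $\top$); CTL $\wedge,\vee$ map to $\&,\oplus$. With $\phi=[\![F]\!]_{\mathcal{R}}$, $\psi=[\![G]\!]_{\mathcal{R}}$, and $T_{\mathsf{A}}(Y) = \mathop{\&}_{s\to s'\in\mathcal{R}}\big(\mathrm{neg}(s)\oplus(\mathrm{pos}(s)\otimes(\llbracket s'\rrbracket$ ⅋ $Y))\big)$, $T_{\mathsf{E}}(Y)=\bigoplus_{s\to s'\in\mathcal{R}}\big(\mathrm{pos}(s)\otimes(\llbracket s'\rrbracket$ ⅋ $Y)\big)$: $[\![\mathsf{AX}F]\!]=T_{\mathsf{A}}(\phi)$, $[\![\mathsf{EX}F]\!]=T_{\mathsf{E}}(\phi)$, $[\![\mathsf{AF}F]\!]=\mu Y.\,\phi\oplus T_{\mathsf{A}}(Y)$, $[\![\mathsf{EF}F]\!]=\mu Y.\,\phi\oplus T_{\mathsf{E}}(Y)$, $[\![\mathsf{AG}F]\!]=\nu Y.\,\phi\,\&\,T_{\mathsf{A}}(Y)$,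 $[\![\mathsf{EG}F]\!]=\nu Y.\,\phi\,\&\,T_{\mathsf{E}}(Y)$, $[\![\mathsf{A}[F\,\mathsf{U}\,G]]\!]=\mu Y.\,\psi\oplus(\phi\,\&\,T_{\mathsf{A}}(Y))$, $[\![\mathsf{E}[F\,\mathsf{U}\,G]]\!]=\mu Y.\,\psi\oplus(\phi\,\&\,T_{\mathsf{E}}(Y))$. *)

From mathcomp Require Import all_boot.
From Stdlib Require Import Permutation.

Set Implicit Arguments.
Unset Strict Implicit.
Unset Printing Implicit Defensive.

(* muMALL (propositional), formulas in negation normal form, with      *)
(* fixed-point variables as de Bruijn indices.  Variables only occur   *)
(* positively (negation is the syntactic De Morgan dual).             *)

Inductive form : Type :=
| Pos  : nat -> form
| Neg  : nat -> form
| Var  : nat -> form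
| One  : form
| Bot  : form
| Zero : form
| Top  : form
| Tens : form -> form -> form
| Par  : form -> form -> form
| Plus : form -> form -> form
| With : form -> form -> form
| Mu   : form -> form           (* mu X. B, X = index 0 in B *)
| Nu   : form -> form.

Fixpoint dual (A : form) : form :=
  match A with
  | Pos i => Neg i
  | Neg i => Pos i
  | Var k => Var k
  | One => Bot
  | Bot => One
  | Zero => Top
  | Top => Zero
  | Tens A B => Par (dual A) (dual B)
  | Par A B => Tens (dual A) (dual B)
  | Plus A B => With (dual A) (dual B)
  | With A B => Plus (dual A) (dual B)
  | Mu B => Nu (dual B)
  | Nu B => Mu (dual B)
  end.

Fixpoint closed_at (d : nat) (A : form) : bool :=
  match A with
  | Var k => k < d
  | Tens A B | Par A B | Plus A B | With A B => closed_at d A && closed_at d B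
  | Mu B | Nu B => closed_at d.+1 B
  | _ => true
  end.

Definition closed (A : form) : bool := closed_at 0 A.

(* substitution of a closed formula S for the variable bound at depth d *)
Fixpoint subst_at (d : nat) (S A : form) : form :=
  match A with
  | Var k => if k == d then S else if d < k then Var k.-1 else Var k
  | Tens A B => Tens (subst_at d S A) (subst_at d S B)
  | Par A B => Par (subst_at d S A) (subst_at d S B)
  | Plus A B => Plus (subst_at d S A) (subst_at d S B)
  | With A B => With (subst_at d S A) (subst_at d S B)
  | Mu B => Mu (subst_at d.+1 S B)
  | Nu B => Nu (subst_at d.+1 S B)
  | A => A
  end.

Definition inst (B S : form) : form := subst_at 0 S B.

Inductive provable : list form -> Prop :=
| pr_ex   : forall G D, Permutation G D -> provable G -> provable D
| pr_init : forall i, provable [:: Pos i; Neg i]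
| pr_cut  : forall A G D, closed A ->
    provable (A :: G) -> provable (dual A :: D) -> provable (G ++ D)
| pr_one  : provable [:: One]
| pr_bot  : forall G, provable G -> provable (Bot :: G)
| pr_top  : forall G, provable (Top :: G)
| pr_tens : forall A B G D,
    provable (A :: G) -> provable (B :: D) -> provable (Tens A B :: G ++ D)
| pr_par  : forall A B G, provable (A :: B :: G) -> provable (Par A B :: G)
| pr_plus_l : forall A B G, provable (A :: G) -> provable (Plus A B :: G)
| pr_plus_r : forall A B G, provable (B :: G) -> provable (Plus A B :: G)
| pr_with : forall A B G,
    provable (A :: G) -> provable (B :: G) -> provable (With A B :: G)
| pr_mu   : forall B G, provable (inst B (Mu B) :: G) -> provable (Mu B :: G)
| pr_nu   : forall B S G, closed S ->
    provable (S :: G) -> provable [:: dual S; inst B S] ->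
    provable (Nu B :: G).

Fixpoint bigop_ne (op : form -> form -> form) (u : form) (l : list form) : form :=
  match l with
  | [::] => u
  | [:: x] => x
  | x :: l' => op x (bigop_ne op u l')
  end.

(* V = {a_0, ..., a_(n-1)};  a state is a valuation V -> bool *)
Definition state (n : nat) := {ffun 'I_n -> bool}.
(* a state formula: conjunction of literals on a subset of V
   (None = variable does not occur) *)
Definition sform (n : nat) := {ffun 'I_n -> option bool}.
Definition rule (n : nat) := (state n * state n)%type.

Inductive ctl (n : nat) : Type :=
| CSt  : sform n -> ctl n
| CAnd : ctl n -> ctl n -> ctl n
| COr  : ctl n -> ctl n -> ctl n
| CAX  : ctl n -> ctl n
| CEX  : ctl n -> ctl n
| CAF  : ctl n -> ctl n
| CEF  : ctl n -> ctl n
| CAG  : ctl n -> ctl n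
| CEG  : ctl n -> ctl n
| CAU  : ctl n -> ctl n -> ctl n
| CEU  : ctl n -> ctl n -> ctl n.

Section Semantics.
Variables (n : nat) (R : seq (rule n)).

Definition step (s t : state n) : Prop := (s, t) \in R.

Definition serial : Prop := forall s : state n, exists t, step s t.

Definition is_path (s : state n) (p : nat -> state n) : Prop :=
  p 0 = s /\ forall k, step (p k) (p k.+1).

Definition sat_sf (s : state n) (p : sform n) : Prop :=
  forall i b, p i = Some b -> s i = b.

Fixpoint sat (s : state n) (F : ctl n) {struct F} : Prop :=
  match F with
  | CSt p => sat_sf s p
  | CAnd F G => sat s F /\ sat s G
  | COr F G => sat s F \/ sat s G
  | CAX F => forall t, step s t -> sat t F
  | CEX F => exists t, step s t /\ sat t F
  | CAF F => forall p, is_path s p -> exists k, sat (p k) F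
  | CEF F => exists p, is_path s p /\ exists k, sat (p k) F
  | CAG F => forall p, is_path s p -> forall k, sat (p k) F
  | CEG F => exists p, is_path s p /\ forall k, sat (p k) F
  | CAU F G => forall p, is_path s p ->
      exists k, sat (p k) G /\ forall j, j < k -> sat (p j) F
  | CEU F G => exists p, is_path s p /\
      exists k, sat (p k) G /\ forall j, j < k -> sat (p j) F
  end.

Definition vars : seq 'I_n := enum 'I_n.

Definition lit (s : state n) (i : 'I_n) : form :=
  if s i then Pos i else Neg i.

Definition enc_state (s : state n) : form :=
  bigop_ne Par Bot [seq dual (lit s i) | i <- vars].

Definition pos (s : state n) : form :=
  bigop_ne Tens One [seq lit s i | i <- vars].

Definition neg (s : state n) : form :=
  bigop_ne Plus Zero [seq Tens (dual (lit s i)) Top | i <- vars].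

Definition pos_sf (p : sform n) : form :=
  bigop_ne Tens One
    [seq (match p i with Some true => Pos i | Some false => Neg i | None => Top end)
    | i <- vars].

Definition TA (Y : form) : form :=
  bigop_ne With Top
    [seq Plus (neg r.1) (Tens (pos r.1) (Par (enc_state r.2) Y)) | r <- R].

Definition TE (Y : form) : form :=
  bigop_ne Plus Zero
    [seq Tens (pos r.1) (Par (enc_state r.2) Y) | r <- R].

(* encodings of subformulas are closed, so they need no shifting
   under the binder; Var 0 is the bound variable Y *)
Fixpoint enc (F : ctl n) : form :=
  match F with
  | CSt p => pos_sf p
  | CAnd F G => With (enc F) (enc G)
  | COr F G => Plus (enc F) (enc G)
  | CAX F => TA (enc F)
  | CEX F => TE (enc F)
  | CAF F => Mu (Plus (enc F) (TA (Var 0)))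
  | CEF F => Mu (Plus (enc F) (TE (Var 0)))
  | CAG F => Nu (With (enc F) (TA (Var 0)))
  | CEG F => Nu (With (enc F) (TE (Var 0)))
  | CAU F G => Mu (Plus (enc G) (With (enc F) (TA (Var 0))))
  | CEU F G => Mu (Plus (enc G) (With (enc F) (TE (Var 0))))
  end.

End Semantics.

(* The
   literals of [[s]] prove pos(s) and refute neg(u) for every u <> s, so T_A
   and T_E become one-step derivable rules.  A least fixed point is unfolded
   finitely often: along a witness path for EF/EU, and for AF/AU up to a
   depth that exists by König's lemma, the transition relation being finite.
   For AG/EG the invariant of the coinduction rule is the disjunction of
   pos(t) over the states t satisfying the formula.

   For the converse, muMALL (with cut) is sound for a truth-value model in
   which a formula denotes a family of sets of tokens: a tensor splits its set
   into two disjoint parts, A^perp holds at x iff A fails at the complement of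
   x, and fixed points are the lattice-theoretic ones.  A state denotes its set
   of literals; pos(t) holds on a part of the literal set of s only if t = s
   and the part is everything, so the rest of a transition step is evaluated
   at the empty set, where a par is a linear implication.  The denotation of
   [[F]] at the literal set of s thus unfolds to the CTL semantics. *)

From mathcomp Require Import all_boot.
From Stdlib Require Import Permutation Classical ClassicalEpsilon.
From Stdlib Require Import FunctionalExtensionality PropExtensionality.

Set Implicit Arguments.
Unset Strict Implicit.
Unset Printing Implicit Defensive.

Section FamilySemantics.
Variable G : finType.

Definition fam := {set G} -> Prop.

Definition subfam (X Y : fam) := forall x, X x -> Y x.

Definition fam_orth (X : fam) : fam := fun x => ~ X (~: x).

Definition fam_tens (X Y : fam) : fam :=
  fun x => exists a : {set G}, a \subset x /\ X a /\ Y (x :\: a).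

Definition fam_par (X Y : fam) : fam := fam_orth (fam_tens (fam_orth X) (fam_orth Y)).

Definition fam_one : fam := fun x => x = set0.

Definition lfp (f : fam -> fam) : fam := fun x => forall X, subfam (f X) X -> X x.

Definition gfp (f : fam -> fam) : fam := fun x => exists X, subfam X (f X) /\ X x.

Definition monotone (f : fam -> fam) := forall X Y, subfam X Y -> subfam (f X) (f Y).

Lemma famext (X Y : fam) : (forall x, X x <-> Y x) -> X = Y.
Proof.
by move=> XY; apply: functional_extensionality => x; apply: propositional_extensionality.
Qed.

Lemma fam_orthK X : fam_orth (fam_orth X) = X.
Proof.
by apply: famext => x; rewrite /fam_orth setCK; split; [exact: NNPP | move=> Xx; apply].
Qed.

Lemma fam_orth_anti X Y : subfam X Y -> subfam (fam_orth Y) (fam_orth X).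
Proof. by move=> XY x nYx Xx; apply/nYx/XY. Qed.

Lemma fam_tens_mono X X' Y Y' :
  subfam X X' -> subfam Y Y' -> subfam (fam_tens X Y) (fam_tens X' Y').
Proof. by move=> XX' YY' x [a [ax [Xa Yxa]]]; exists a; split; last split; auto. Qed.

Lemma fam_par_mono X X' Y Y' :
  subfam X X' -> subfam Y Y' -> subfam (fam_par X Y) (fam_par X' Y').
Proof. by move=> XX' YY'; apply/fam_orth_anti/fam_tens_mono; apply: fam_orth_anti. Qed.

Lemma fam_tensC X Y : fam_tens X Y = fam_tens Y X.
Proof.
suff tensC Z T : subfam (fam_tens Z T) (fam_tens T Z) by apply: famext; split; apply: tensC.
move=> x [a [ax [Za Txa]]]; exists (x :\: a); split; first exact: subsetDl.
by rewrite setDDr setDv set0U (setIidPr ax).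
Qed.

Lemma fam_tensA X Y Z : fam_tens (fam_tens X Y) Z = fam_tens X (fam_tens Y Z).
Proof.
apply: famext => x; split.
- move=> [a [ax [[b [ba [Xb Yab]]] Zxa]]].
  exists b; split; first exact: subset_trans ba ax.
  split=> //; exists (a :\: b); split; first exact: setSD.
  by split=> //; rewrite setDDl [a :\: b]setDE setUIr setUCr setIT (setUidPr ba).
- move=> [b [bx [Xb [c [c_xb [Yc Zxbc]]]]]].
  have bc_x : b :|: c \subset x.
    by rewrite subUset bx (subset_trans c_xb) ?subsetDl.
  exists (b :|: c); split=> //; split; last by rewrite -setDDl.
  exists b; split; first exact: subsetUl.
  have -> // : (b :|: c) :\: b = c.
  rewrite setDUl setDv set0U; apply/setDidPl.
  by rewrite disjoints_subset (subset_trans c_xb) // setDE subsetIr.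
Qed.

Lemma fam_tens1 Y : fam_tens fam_one Y = Y.
Proof.
apply: famext => x; split=> [[a [_ [-> Yx]]]|Yx]; first by rewrite setD0 in Yx.
by exists set0; rewrite sub0set setD0.
Qed.

Lemma fam_orth_tens X Y : fam_orth (fam_tens X Y) = fam_par (fam_orth X) (fam_orth Y).
Proof. by rewrite /fam_par !fam_orthK. Qed.

Lemma fam_orth_par X Y : fam_orth (fam_par X Y) = fam_tens (fam_orth X) (fam_orth Y).
Proof. by rewrite /fam_par fam_orthK. Qed.

Lemma fam_parC X Y : fam_par X Y = fam_par Y X.
Proof. by rewrite /fam_par fam_tensC. Qed.

Lemma fam_parA X Y Z : fam_par (fam_par X Y) Z = fam_par X (fam_par Y Z).
Proof. by rewrite /fam_par !fam_orthK fam_tensA. Qed.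

Lemma fam_par_botl Y : fam_par (fam_orth fam_one) Y = Y.
Proof. by rewrite /fam_par fam_orthK fam_tens1 fam_orthK. Qed.

Lemma fam_par_botr Y : fam_par Y (fam_orth fam_one) = Y.
Proof. by rewrite fam_parC fam_par_botl. Qed.

Lemma fam_par_set0 X Y : fam_par X Y set0 <-> subfam (fam_orth X) Y.
Proof.
rewrite /fam_par /fam_orth /fam_tens setC0; split.
- move=> nXY x nXx; apply: NNPP => nYx; apply: nXY.
  by exists x; rewrite subsetT setTD setCK.
- by move=> XY [a [_ [nXa nYa]]]; apply/nYa/XY; rewrite setTD setCK.
Qed.

Lemma lfp_fold f : monotone f -> subfam (f (lfp f)) (lfp f).
Proof. by move=> f_mono x fx X fX; apply/fX/(f_mono (lfp f)) => // y; apply. Qed.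

Lemma lfp_ind f X : subfam (f X) X -> subfam (lfp f) X.
Proof. by move=> fX x; apply. Qed.

Lemma gfp_coind f X : subfam X (f X) -> subfam X (gfp f).
Proof. by move=> Xf x Xx; exists X. Qed.

Lemma fam_orth_lfp f : fam_orth (lfp f) = gfp (fun X => fam_orth (f (fam_orth X))).
Proof.
apply: famext => x; split.
- move=> nfx; apply: NNPP => ngx; apply: nfx => X fX.
  apply: NNPP => nXx; apply: ngx; exists (fam_orth X); split=> //.
  by rewrite fam_orthK; apply: fam_orth_anti.
- move=> [Z [Zf Zx]] fx.
  have oZ_closed : subfam (f (fam_orth Z)) (fam_orth Z).
    by move=> y fy /Zf; rewrite /fam_orth setCK.
  by apply: (fx _ oZ_closed); rewrite setCK.
Qed.

Lemma fam_orth_gfp f : fam_orth (gfp f) = lfp (fun X => fam_orth (f (fam_orth X))).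
Proof.
rewrite -[RHS]fam_orthK fam_orth_lfp; congr (fam_orth (gfp _)).
by apply: functional_extensionality => X; rewrite !fam_orthK.
Qed.

Variable atom : nat -> fam.

Definition scons (X : fam) (r : nat -> fam) (k : nat) : fam :=
  if k is k'.+1 then r k' else X.

Fixpoint interp (A : form) (r : nat -> fam) : fam :=
  match A with
  | Pos i => atom i
  | Neg i => fam_orth (atom i)
  | Var k => r k
  | One => fam_one
  | Bot => fam_orth fam_one
  | Zero => fun _ => False
  | Top => fun _ => True
  | Tens A B => fam_tens (interp A r) (interp B r)
  | Par A B => fam_par (interp A r) (interp B r)
  | Plus A B => fun x => interp A r x \/ interp B r x
  | With A B => fun x => interp A r x /\ interp B r x
  | Mu B => lfp (fun X => interp B (scons X r))
  | Nu B => gfp (fun X => interp B (scons X r))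
  end.

Lemma interp_mono A r r' :
  (forall k, subfam (r k) (r' k)) -> subfam (interp A r) (interp A r').
Proof.
elim: A r r' => [i|i|k|||||A IHA B IHB|A IHA B IHB|A IHA B IHB|A IHA B IHB|B IHB|B IHB] r r' rr' /=;
  try by move=> x.
- exact: rr'.
- by apply: fam_tens_mono; [apply: IHA | apply: IHB].
- by apply: fam_par_mono; [apply: IHA | apply: IHB].
- by move=> x [Ax|Bx]; [left; apply: IHA Ax | right; apply: IHB Bx].
- by move=> x [Ax Bx]; split; [apply: IHA Ax | apply: IHB Bx].
- move=> x lfp_x X BX; apply: lfp_x => y /(IHB (scons X r) (scons X r')) By; apply/BX/By.
  by case=> //= k; apply: rr'.
- move=> x [X [XB Xx]]; exists X; split=> // y /XB; apply: IHB.
  by case=> //= k; apply: rr'.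
Qed.

Lemma eq_interp_closed_at A d r r' :
  closed_at d A -> (forall k, k < d -> r k = r' k) -> interp A r = interp A r'.
Proof.
elim: A d r r' => //= [k|A IHA B IHB|A IHA B IHB|A IHA B IHB|A IHA B IHB|B IHB|B IHB] d r r'.
- by move=> kd rr'; apply: rr'.
- by move=> /andP[cA cB] rr'; rewrite (IHA d r r') ?(IHB d r r').
- by move=> /andP[cA cB] rr'; rewrite (IHA d r r') ?(IHB d r r').
- by move=> /andP[cA cB] rr'; rewrite (IHA d r r') ?(IHB d r r').
- by move=> /andP[cA cB] rr'; rewrite (IHA d r r') ?(IHB d r r').
- move=> cB rr'; congr lfp; apply: functional_extensionality => X.
  by apply: (IHB d.+1) => // -[|k] //= /rr'.
- move=> cB rr'; congr gfp; apply: functional_extensionality => X.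
  by apply: (IHB d.+1) => // -[|k] //= /rr'.
Qed.

Lemma interp_closed A r r' : closed A -> interp A r = interp A r'.
Proof. by move=> cA; apply: eq_interp_closed_at cA _. Qed.

Lemma interp_dual A r : interp (dual A) r = fam_orth (interp A (fam_orth \o r)).
Proof.
have orth_scons X r' : fam_orth \o scons X r' = scons (fam_orth X) (fam_orth \o r').
  by apply: functional_extensionality => -[].
elim: A r => /= [i|i|k|||||A IHA B IHB|A IHA B IHB|A IHA B IHB|A IHA B IHB|B IHB|B IHB] r;
  try by rewrite ?fam_orthK.
- by apply: famext => x; split=> // _ [].
- by apply: famext => x; split=> // nT; apply: nT.
- by rewrite IHA IHB fam_orth_tens.
- by rewrite IHA IHB fam_orth_par.
- rewrite IHA IHB; apply: famext => x; split=> [[nA nB] [Ax|Bx]|nAB] //.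
  by split=> ?; apply: nAB; [left|right].
- rewrite IHA IHB; apply: famext => x; split=> [[nA|nB] [Ax Bx]|nAB] //.
  by apply: NNPP => nAorB; apply: nAB; split; apply: NNPP => ?; apply: nAorB; [left|right].
- rewrite fam_orth_lfp; congr gfp; apply: functional_extensionality => X.
  by rewrite IHB orth_scons.
- rewrite fam_orth_gfp; congr lfp; apply: functional_extensionality => X.
  by rewrite IHB orth_scons.
Qed.

Lemma interp_dual_closed A r : closed A -> interp (dual A) r = fam_orth (interp A r).
Proof. by move=> cA; rewrite interp_dual (interp_closed _ r cA). Qed.

Definition env_ins (d : nat) (Z : fam) (r : nat -> fam) (k : nat) : fam :=
  if k < d then r k else if k == d then Z else r k.-1.

Lemma env_ins_scons d Z X r : env_ins d.+1 Z (scons X r) = scons X (env_ins d Z r).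
Proof.
apply: functional_extensionality => -[|k] //=.
by rewrite /env_ins ltnS eqSS; case: ltngtP => //; case: k.
Qed.

Lemma interp_subst_at S A d Z r : (forall r', interp S r' = Z) ->
  interp (subst_at d S A) r = interp A (env_ins d Z r).
Proof.
move=> SZ; elim: A d r => //= [k|A IHA B IHB|A IHA B IHB|A IHA B IHB|A IHA B IHB|B IHB|B IHB] d r.
- by rewrite /env_ins; case: ltngtP => //= ->; rewrite eqxx.
- by rewrite IHA IHB.
- by rewrite IHA IHB.
- by rewrite IHA IHB.
- by rewrite IHA IHB.
- by congr lfp; apply: functional_extensionality => X; rewrite IHB env_ins_scons.
- by congr gfp; apply: functional_extensionality => X; rewrite IHB env_ins_scons.
Qed.

Lemma interp_inst B S r : closed S -> interp (inst B S) r = interp B (scons (interp S r) r).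
Proof.
move=> cS; rewrite /inst (interp_subst_at _ _ _ (fun r' => interp_closed r' r cS)).
by congr interp; apply: functional_extensionality => -[].
Qed.

End FamilySemantics.

Lemma closed_at_le A d d' : d <= d' -> closed_at d A -> closed_at d' A.
Proof.
elim: A d d' => [i|i|k|||||A IHA B IHB|A IHA B IHB|A IHA B IHB|A IHA B IHB|B IHB|B IHB]
  d d' dd' //=.
- by move=> kd; apply: leq_trans kd dd'.
- by move=> /andP[/(IHA _ _ dd') -> /(IHB _ _ dd') ->].
- by move=> /andP[/(IHA _ _ dd') -> /(IHB _ _ dd') ->].
- by move=> /andP[/(IHA _ _ dd') -> /(IHB _ _ dd') ->].
- by move=> /andP[/(IHA _ _ dd') -> /(IHB _ _ dd') ->].
- exact: IHB.
- exact: IHB.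
Qed.

Lemma closed_at_dual A d : closed_at d (dual A) = closed_at d A.
Proof. by elim: A d => //= A IHA B IHB d; rewrite IHA IHB. Qed.

Lemma closed_at_subst S A d : closed S -> closed_at d.+1 A -> closed_at d (subst_at d S A).
Proof.
move=> cS; elim: A d => //= [k|A IHA B IHB|A IHA B IHB|A IHA B IHB|A IHA B IHB|B IHB|B IHB] d;
  try by move=> /andP[/IHA -> /IHB ->].
- by rewrite ltnS; case: (ltngtP k d) => //= _ _; apply: closed_at_le cS.
- exact: IHB.
- exact: IHB.
Qed.

Lemma closed_dual A : closed (dual A) = closed A.
Proof. exact: closed_at_dual. Qed.

Lemma closed_inst B S : closed S -> closed_at 1 B -> closed (inst B S).
Proof. exact: closed_at_subst. Qed.

Lemma all_Permutation (T : Type) (P : pred T) (l l' : seq T) :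
  Permutation l l' -> all P l = all P l'.
Proof. by elim=> //= [x l1 l2 _ ->|x y l1|l1 l2 l3 _ -> _ ->] //; rewrite andbCA. Qed.

Section Soundness.
Variables (G : finType) (atom : nat -> fam G) (r0 : nat -> fam G).

Local Notation "[[ A ]]" := (interp atom A r0).

Definition seq_interp (L : seq form) : fam G :=
  foldr (fun A X => fam_par [[A]] X) (fam_orth (@fam_one G)) L.

Definition valid (L : seq form) : Prop := seq_interp L set0.

Lemma seq_interp_cat L1 L2 : seq_interp (L1 ++ L2) = fam_par (seq_interp L1) (seq_interp L2).
Proof. by elim: L1 => /= [|A L1 ->]; rewrite ?fam_par_botl ?fam_parA. Qed.

Lemma seq_interp_perm L1 L2 : Permutation L1 L2 -> seq_interp L1 = seq_interp L2.
Proof.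
elim=> //= [A L1' L2' _ ->|A B L|L1' L2' L3 _ -> _ ->] //.
by rewrite -!fam_parA (fam_parC [[B]]).
Qed.

Lemma valid_cons A L : valid (A :: L) <-> subfam (fam_orth [[A]]) (seq_interp L).
Proof. exact: fam_par_set0. Qed.

Lemma valid_cut A L1 L2 :
  closed A -> valid (A :: L1) -> valid (dual A :: L2) -> valid (L1 ++ L2).
Proof.
move=> cA /valid_cons AL1 /valid_cons; rewrite interp_dual_closed // fam_orthK => AL2.
rewrite /valid seq_interp_cat; apply/fam_par_set0 => x /(fam_orth_anti AL1).
by rewrite fam_orthK; apply: AL2.
Qed.

Lemma valid_tens A B L1 L2 :
  valid (A :: L1) -> valid (B :: L2) -> valid (Tens A B :: L1 ++ L2).
Proof.
move=> /valid_cons AL1 /valid_cons BL2; apply/valid_cons.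
by rewrite seq_interp_cat /= fam_orth_tens; apply: fam_par_mono.
Qed.

Lemma valid_with A B L : valid (A :: L) -> valid (B :: L) -> valid (With A B :: L).
Proof.
move=> /valid_cons AL /valid_cons BL; apply/valid_cons => x nAB.
have [Ax|nAx] := classic ([[A]] (~: x)); last exact: AL.
by apply: BL => Bx; apply: nAB.
Qed.

Lemma valid_mu B L : closed_at 1 B -> valid (inst B (Mu B) :: L) -> valid (Mu B :: L).
Proof.
move=> cB /valid_cons; rewrite interp_inst // => BL.
have B_mono : monotone (fun X => interp atom B (scons X r0)).
  by move=> X Y XY; apply: interp_mono => -[|k] //= z.
by apply/valid_cons => x nMu; apply: BL => Bx; apply: nMu; apply: lfp_fold B_mono _ Bx.
Qed.

Lemma valid_nu B S L : closed S -> closed_at 1 B ->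
  valid (S :: L) -> valid [:: dual S; inst B S] -> valid (Nu B :: L).
Proof.
move=> cS cB /valid_cons SL /valid_cons.
rewrite /= fam_par_botr interp_dual_closed // fam_orthK interp_inst // => S_post.
by apply/valid_cons => x nNu; apply: SL => Sx; apply: nNu; apply: gfp_coind S_post _ Sx.
Qed.

Theorem provable_sound L : provable L -> all closed L -> valid L.
Proof.
elim=> {L} /=.
- by move=> L1 L2 L12 _ IH; rewrite -(all_Permutation _ L12) /valid -(seq_interp_perm L12).
- by move=> i _; apply/valid_cons => x; rewrite /= fam_par_botr.
- move=> A L1 L2 cA _ IH1 _ IH2; rewrite all_cat => /andP[cL1 cL2].
  by apply: valid_cut (IH1 _) (IH2 _); rewrite ?closed_dual cA.
- by rewrite /valid /= fam_par_botr.
- by move=> L _ IH cL; rewrite /valid /= fam_par_botl; apply: IH.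
- by move=> L _; apply/valid_cons => x /(_ I).
- move=> A B L1 L2 _ IH1 _ IH2; rewrite all_cat => /and3P[/andP[cA cB] cL1 cL2].
  by apply: valid_tens; [apply: IH1 | apply: IH2]; apply/andP.
- move=> A B L _ IH /andP[/andP[cA cB] cL].
  by rewrite /valid /= fam_parA; apply: IH; apply/and3P.
- move=> A B L _ IH /andP[/andP[cA cB] cL].
  have /valid_cons AL : valid (A :: L) by apply: IH; apply/andP.
  by apply/valid_cons => x nAB; apply: AL => Ax; apply: nAB; left.
- move=> A B L _ IH /andP[/andP[cA cB] cL].
  have /valid_cons BL : valid (B :: L) by apply: IH; apply/andP.
  by apply/valid_cons => x nAB; apply: BL => Bx; apply: nAB; right.
- move=> A B L _ IH1 _ IH2 /andP[/andP[cA cB] cL].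
  by apply: valid_with; [apply: IH1 | apply: IH2]; apply/andP.
- move=> B L _ IH /andP[cB cL].
  by apply: valid_mu => //; apply: IH; rewrite /= closed_inst.
- move=> B S L cS _ IH1 _ IH2 /andP[cB cL].
  apply: (valid_nu cS) => //; first by apply: IH1; apply/andP.
  by apply: IH2; rewrite /= closed_dual cS closed_inst.
Qed.

End Soundness.

Lemma bigop_ne_morph (f : form -> form) op op' u l :
  (forall A B, f (op A B) = op' (f A) (f B)) ->
  f (bigop_ne op u l) = bigop_ne op' (f u) (map f l).
Proof. by move=> f_op; elim: l => //= A [|B l] //= IH; rewrite f_op IH. Qed.

Lemma closed_at_bigop op u l d :
  (forall A B, closed_at d (op A B) = closed_at d A && closed_at d B) ->
  closed_at d u -> all (closed_at d) l -> closed_at d (bigop_ne op u l).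
Proof.
by move=> c_op cu; elim: l => //= A [|B l] IH /andP[cA cl] //; rewrite c_op cA IH.
Qed.

Section BigInterp.
Variables (G : finType) (atom : nat -> fam G).

Local Notation interp := (interp atom).

Lemma interp_bigTens_cons A l r :
  interp (bigop_ne Tens One (A :: l)) r = fam_tens (interp A r) (interp (bigop_ne Tens One l) r).
Proof. by case: l => //=; rewrite fam_tensC fam_tens1. Qed.

Lemma interp_bigTens_sub (T : eqType) (F : T -> form) l r x :
  interp (bigop_ne Tens One (map F l)) r x ->
  forall i, i \in l -> exists2 a : {set G}, a \subset x & interp (F i) r a.
Proof.
elim: l x => //= j l IH x; rewrite -/(map F (j :: l)) interp_bigTens_cons.
move=> [a [ax [Fja Flxa]]] i; rewrite inE => /predU1P[-> | il]; first by exists a.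
by have [b bxa Fib] := IH _ Flxa i il; exists b => //; apply: subset_trans bxa (subsetDl _ _).
Qed.

Lemma interp_bigPlus (T : eqType) (F : T -> form) l r x :
  interp (bigop_ne Plus Zero (map F l)) r x -> exists2 i, i \in l & interp (F i) r x.
Proof.
elim: l => //= j [|k l] IH; first by exists j; rewrite ?inE.
case=> [Fjx|/IH[i il Fix]]; first by exists j; rewrite ?inE ?eqxx.
by exists i; rewrite // inE il orbT.
Qed.

Lemma interp_bigWith (T : eqType) (F : T -> form) l r x :
  interp (bigop_ne With Top (map F l)) r x -> forall i, i \in l -> interp (F i) r x.
Proof.
elim: l => //= j [|k l] IH; first by move=> Fjx i /[!inE] /eqP ->.
by move=> [Fjx Flx] i /[!inE] /predU1P[-> | il] //; apply: IH.
Qed.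

End BigInterp.

Lemma provable_bigPar L D : provable (L ++ D) -> provable (bigop_ne Par Bot L :: D).
Proof.
elim: L D => /= [|A [|B L] IH] D; first exact: pr_bot; first by [].
move=> ABLD; apply/pr_par/(pr_ex (perm_swap _ _ _))/IH.
exact: pr_ex (Permutation_middle (B :: L) D A) ABLD.
Qed.

Lemma provable_bigTens (T : eqType) (f : T -> form) (g : T -> seq form) l :
  (forall i, i \in l -> provable (f i :: g i)) ->
  provable (bigop_ne Tens One (map f l) :: flatten (map g l)).
Proof.
elim: l => /= [|i [|j l] IH] fg; first exact: pr_one.
  by rewrite cats0; apply: fg; rewrite inE.
apply: pr_tens; first by apply: fg; rewrite inE eqxx.
by apply: IH => k kl; apply: fg; rewrite inE kl orbT.
Qed.

Lemma provable_bigWith (T : eqType) (f : T -> form) l D :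
  (forall i, i \in l -> provable (f i :: D)) -> provable (bigop_ne With Top (map f l) :: D).
Proof.
elim: l => /= [|i [|j l] IH] fD; first exact: pr_top.
  by apply: fD; rewrite inE.
apply: pr_with; first by apply: fD; rewrite inE eqxx.
by apply: IH => k kl; apply: fD; rewrite inE kl orbT.
Qed.

Lemma provable_bigPlus (T : eqType) (f : T -> form) l D i :
  i \in l -> provable (f i :: D) -> provable (bigop_ne Plus Zero (map f l) :: D).
Proof.
elim: l => //= j [|k l] IH; first by rewrite inE => /eqP <-.
rewrite inE => /predU1P[<- | il] fiD; first exact: pr_plus_l.
by apply/pr_plus_r/IH.
Qed.

Lemma enc_state_dual n (s : state n) : enc_state s = dual (pos s).
Proof. by rewrite /pos (@bigop_ne_morph dual Tens Par) // -map_comp. Qed.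

Lemma closed_pos n (s : state n) d : closed_at d (pos s).
Proof.
by apply: closed_at_bigop; rewrite // all_map; apply/allP => i _ /=; rewrite /lit; case: ifP.
Qed.

Lemma closed_enc_state n (s : state n) d : closed_at d (enc_state s).
Proof. by rewrite enc_state_dual closed_at_dual closed_pos. Qed.

Section LiteralModel.
Variables (n : nat) (R : seq (rule n)).

Definition token := option ('I_n * bool).

(* A set without [None] is a set of literals and satisfies [Pos i] when it
   contains the literal [(i, true)].  Its complement contains [None]; there
   [Pos i] tests [(i, false)] instead, so that [Neg i], which is evaluated on
   the complement, holds at a literal set exactly when it contains [(i, false)]. *)
Definition atom_lits (k : nat) : fam token :=
  fun x : {set token} => exists2 i : 'I_n, val i = k & Some (i, None \notin x) \in x.

Local Notation interp := (interp atom_lits).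

Definition lits (s : state n) : {set token} := [set Some (i, s i) | i : 'I_n].

Lemma mem_lits s i b : (Some (i, b) \in lits s) = (s i == b).
Proof. by apply/imsetP/eqP => [[j _ [-> ->]] | <-] //; exists i. Qed.

Lemma None_notin_sub_lits (a : {set token}) s : a \subset lits s -> None \notin a.
Proof. by move=> /subsetP a_s; apply/negP => /a_s /imsetP[]. Qed.

Lemma interp_lit (b : bool) (i : 'I_n) (a : {set token}) r : None \notin a ->
  interp (if b then Pos i else Neg i) r a <-> Some (i, b) \in a.
Proof.
move=> Na; case: b => /=.
  by split=> [[j /val_inj ->]|ia]; [rewrite Na | exists i; rewrite ?Na].
split=> [nA | ia [j /val_inj ->]].
  by apply/negPn/negP => nia; apply: nA; exists i; rewrite // !inE Na.
by rewrite !inE Na ia.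
Qed.

Lemma interp_dual_lit u (i : 'I_n) (a : {set token}) r : None \notin a ->
  interp (dual (lit u i)) r a <-> Some (i, ~~ u i) \in a.
Proof.
have -> : dual (lit u i) = if ~~ u i then Pos i else Neg i by rewrite /lit; case: (u i).
exact: interp_lit.
Qed.

Lemma interp_bigTens_lits s (l : seq 'I_n) r : uniq l ->
  interp (bigop_ne Tens One [seq lit s i | i <- l]) r [set Some (i, s i) | i in l].
Proof.
elim: l => /= [_|i l IH /andP[il ul]].
  by apply/setP => x; rewrite in_set0; apply/negbTE/imsetP => -[].
rewrite interp_bigTens_cons; exists [set Some (i, s i)]; split.
  by rewrite sub1set; apply/imsetP; exists i; rewrite ?mem_head.
split; first by apply/interp_lit; rewrite ?inE.
suff -> : [set Some (j, s j) | j in i :: l] :\: [set Some (i, s i)] = [set Some (j, s j) | j in l].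
  exact: IH.
apply/setP => x; rewrite !inE; apply/andP/imsetP => [[xi /imsetP[j]] | [j jl ->]].
  rewrite inE => /predU1P[-> x_i | jl ->]; last by exists j.
  by rewrite x_i eqxx in xi.
split; last by apply/imsetP; exists j; rewrite // inE jl orbT.
by apply: contraNneq il => -[<-].
Qed.

Lemma interp_pos_lits s r : interp (pos s) r (lits s).
Proof.
have -> : lits s = [set Some (i, s i) | i in vars n].
  by apply/setP => x; apply/imsetP/imsetP => -[i _ ->]; exists i; rewrite ?mem_enum.
exact/interp_bigTens_lits/enum_uniq.
Qed.

Lemma interp_pos_sub (u s : state n) (a : {set token}) r :
  a \subset lits s -> interp (pos u) r a -> u = s /\ a = lits s.
Proof.
move=> a_s; rewrite /pos -/(map (lit u) _) => /interp_bigTens_sub pos_u.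
have lit_u i : Some (i, u i) \in a.
  have [b ba /interp_lit lit_b] := pos_u i (mem_enum _ i).
  by apply: (subsetP ba); apply/lit_b/(None_notin_sub_lits (subset_trans ba a_s)).
have us : u = s by apply/ffunP => i; apply/esym/eqP; rewrite -mem_lits (subsetP a_s).
split=> //; apply/eqP; rewrite eqEsubset a_s; apply/subsetP => _ /imsetP[i _ ->].
by rewrite -us.
Qed.

Lemma interp_neg_lits s r : ~ interp (neg s) r (lits s).
Proof.
rewrite /neg -/(map (fun i => Tens (dual (lit s i)) Top) _) => /interp_bigPlus[i _].
move=> [a [a_s [/interp_dual_lit dlit _]]].
by move: (subsetP a_s _ (dlit (None_notin_sub_lits a_s))); rewrite mem_lits; case: (s i).
Qed.

Lemma interp_enc_state_par v Y r :
  interp (Par (enc_state v) Y) r set0 -> interp Y r (lits v).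
Proof.
move=> /= /fam_par_set0.
rewrite enc_state_dual interp_dual_closed ?fam_orthK; last exact: closed_pos.
by apply; apply: interp_pos_lits.
Qed.

Lemma interp_TA_lits s Y r :
  interp (TA R Y) r (lits s) -> forall v, (s, v) \in R -> interp Y r (lits v).
Proof.
rewrite /TA -/(map (fun r : rule n => _) R) => TA_s v sv.
case: (interp_bigWith TA_s sv) => /= [/interp_neg_lits // | [a [a_s [pos_a]]]].
by have [_ ->] := interp_pos_sub a_s pos_a; rewrite setDv; apply: interp_enc_state_par.
Qed.

Lemma interp_TE_lits s Y r :
  interp (TE R Y) r (lits s) -> exists2 v, (s, v) \in R & interp Y r (lits v).
Proof.
rewrite /TE -/(map (fun r : rule n => _) R) => /interp_bigPlus[[u v] uv /= [a [a_s [pos_a]]]].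
have [us ->] := interp_pos_sub a_s pos_a; rewrite setDv -us.
by exists v => //; apply: interp_enc_state_par.
Qed.

Lemma interp_pos_sf_lits s p r : interp (pos_sf p) r (lits s) -> sat_sf s p.
Proof.
rewrite /pos_sf -/(map (fun i => _) _) => /interp_bigTens_sub pos_p i b pib.
have [a a_s] := pos_p i (mem_enum _ i); rewrite pib.
move=> /(interp_lit _ _ _ (None_notin_sub_lits a_s)) /(subsetP a_s).
by rewrite mem_lits => /eqP.
Qed.

End LiteralModel.

Section Paths.
Variables (n : nat) (R : seq (rule n)).

Lemma path_choice (Q : state n -> state n -> Prop) s :
  (forall t, exists v, step R t v /\ Q t v) ->
  exists2 p, is_path R s p & forall k, Q (p k) (p k.+1).
Proof.
move=> next_ex; pose next t := proj1_sig (constructive_indefinite_description _ (next_ex t)).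
have next_spec t : step R t (next t) /\ Q t (next t).
  exact: proj2_sig (constructive_indefinite_description _ (next_ex t)).
exists (fun k => iter k next s) => [|k]; last exact: (next_spec _).2.
by split=> // k; apply: (next_spec _).1.
Qed.

Lemma serial_path : serial R -> forall s, exists p, is_path R s p.
Proof.
move=> ser s; have [|p ps _] := @path_choice (fun _ _ => True) s; last by exists p.
by move=> t; have [v tv] := ser t; exists v.
Qed.

Lemma path_step s p : is_path R s p -> step R s (p 1).
Proof. by case=> <-. Qed.

Lemma path_behead s p : is_path R s p -> is_path R (p 1) (p \o succn).
Proof. by move=> [_ p_step]; split=> // k; apply: p_step. Qed.

Lemma path_cons s t p : step R s t -> is_path R t p ->
  is_path R s (fun k => if k is k'.+1 then p k' else s).
Proof. by move=> st [p0 p_step]; split=> // -[|k] //=; rewrite p0. Qed.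

End Paths.

Section Adequacy.
Variables (n : nat) (R : seq (rule n)).
Hypothesis serialR : serial R.

Local Notation interp := (interp (@atom_lits n)).

Definition adequate (F : ctl n) :=
  forall r t, interp (enc R F) r (lits t) -> sat R t F.

Definition lits_pred (P : state n -> Prop) : fam (token n) :=
  fun x => forall t, x = lits t -> P t.

Lemma Mu_lits_ind B r (P : state n -> Prop) :
  (forall t, interp B (scons (lits_pred P) r) (lits t) -> P t) ->
  forall t, interp (Mu B) r (lits t) -> P t.
Proof.
move=> BP t Mu_t.
have P_closed : subfam (interp B (scons (lits_pred P) r)) (lits_pred P).
  by move=> x Bx u xu; apply: BP; rewrite -xu.
exact: (lfp_ind P_closed Mu_t).
Qed.

Lemma adequate_AF F : adequate F -> adequate (CAF F).
Proof.
move=> adF r; apply: Mu_lits_ind => t /= [Ft | /interp_TA_lits AF_next] p tp.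
  by exists 0; case: tp => -> _; apply: adF Ft.
have [k Fk] := AF_next _ (path_step tp) _ erefl _ (path_behead tp).
by exists k.+1.
Qed.

Lemma adequate_EF F : adequate F -> adequate (CEF F).
Proof.
move=> adF r; apply: Mu_lits_ind => t /= [Ft | /interp_TE_lits[v tv EF_v]].
  have [p tp] := serial_path serialR t.
  by exists p; split=> //; exists 0; case: tp => -> _; apply: adF Ft.
have [p [vp [k Fk]]] := EF_v v erefl.
by exists (fun k => if k is k'.+1 then p k' else t); split; [apply: path_cons tv vp | exists k.+1].
Qed.

Lemma adequate_AU F1 F2 : adequate F1 -> adequate F2 -> adequate (CAU F1 F2).
Proof.
move=> adF1 adF2 r; apply: Mu_lits_ind => t /= [F2t | [F1t /interp_TA_lits AU_next]] p tp.
  by exists 0; case: tp => -> _; split=> //; apply: adF2 F2t.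
have [k [F2k F1k]] := AU_next _ (path_step tp) _ erefl _ (path_behead tp).
exists k.+1; split=> // -[_ | j /F1k //]; case: tp => -> _; exact: adF1 F1t.
Qed.

Lemma adequate_EU F1 F2 : adequate F1 -> adequate F2 -> adequate (CEU F1 F2).
Proof.
move=> adF1 adF2 r; apply: Mu_lits_ind => t /= [F2t | [F1t /interp_TE_lits[v tv EU_v]]].
  have [p tp] := serial_path serialR t; exists p; split=> //.
  by exists 0; case: tp => -> _; split=> //; apply: adF2 F2t.
have [p [vp [k [F2k F1k]]]] := EU_v v erefl.
exists (fun k => if k is k'.+1 then p k' else t); split; first exact: path_cons tv vp.
by exists k.+1; split=> // -[_ | j /F1k //]; apply: adF1 F1t.
Qed.

Lemma adequate_AG F : adequate F -> adequate (CAG F).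
Proof.
move=> adF r t /= [X [X_post Xt]] p tp.
have Xp k : X (lits (p k)).
  elim: k => [|k IHk]; first by case: tp => ->.
  by have [_ /interp_TA_lits] := X_post _ IHk; apply; case: tp => _; apply.
by move=> k; have [Fk _] := X_post _ (Xp k); apply: adF Fk.
Qed.

Lemma adequate_EG F : adequate F -> adequate (CEG F).
Proof.
move=> adF r t /= [X [X_post Xt]].
have X_next u : exists v, step R u v /\ (X (lits u) -> X (lits v)).
  have [Xu | nXu] := classic (X (lits u)).
    by have [_ /interp_TE_lits[v uv Xv]] := X_post _ Xu; exists v.
  by have [p up] := serial_path serialR u; exists (p 1); split; first exact: path_step up.
have [p tp Xp] := path_choice t X_next.
have Xpk k : X (lits (p k)) by elim: k => [|k /Xp //]; case: tp => ->.
by exists p; split=> // k; have [Fk _] := X_post _ (Xpk k); apply: adF Fk.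
Qed.

Lemma enc_adequate F : adequate F.
Proof.
elim: F => [p|F1 IH1 F2 IH2|F1 IH1 F2 IH2|F IH|F IH|F IH|F IH|F IH|F IH
  |F1 IH1 F2 IH2|F1 IH1 F2 IH2].
- by move=> r t; apply: interp_pos_sf_lits.
- by move=> r t [F1t F2t]; split; [apply: IH1 F1t | apply: IH2 F2t].
- by move=> r t [F1t | F2t]; [left; apply: IH1 F1t | right; apply: IH2 F2t].
- by move=> r t /interp_TA_lits AX_t v /AX_t; apply: IH.
- by move=> r t /interp_TE_lits[v tv Fv]; exists v; split=> //; apply: IH Fv.
- exact: adequate_AF.
- exact: adequate_EF.
- exact: adequate_AG.
- exact: adequate_EG.
- exact: adequate_AU.
- exact: adequate_EU.
Qed.

End Adequacy.

Lemma subst_at_closed S A d : closed_at d A -> subst_at d S A = A.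
Proof.
elim: A d => //= [k|A IHA B IHB|A IHA B IHB|A IHA B IHB|A IHA B IHB|B IHB|B IHB] d;
  try by move=> /andP[/IHA -> /IHB ->].
- by move=> kd; rewrite (ltn_eqF kd) ltnNge (ltnW kd).
- by move=> /IHB ->.
- by move=> /IHB ->.
Qed.

Lemma enum_pred_exists (T : finType) (P : T -> Prop) : exists L : seq T, forall t, t \in L <-> P t.
Proof.
exists [seq t <- enum T | if excluded_middle_informative (P t) then true else false] => t.
by rewrite mem_filter mem_enum andbT; case: excluded_middle_informative.
Qed.

Section Completeness.
Variables (n : nat) (R : seq (rule n)).
Hypothesis serialR : serial R.

Definition state_ctx (s : state n) : seq form := [seq dual (lit s i) | i <- vars n].

Lemma closed_neg (s : state n) d : closed_at d (neg s).
Proof.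
by apply: closed_at_bigop; rewrite // all_map; apply/allP => i _ /=; rewrite /lit; case: ifP.
Qed.

Lemma closed_TA Y d : closed_at d Y -> closed_at d (TA R Y).
Proof.
move=> cY; apply: closed_at_bigop; rewrite // all_map; apply/allP => r _ /=.
by rewrite closed_neg closed_pos closed_enc_state cY.
Qed.

Lemma closed_TE Y d : closed_at d Y -> closed_at d (TE R Y).
Proof.
move=> cY; apply: closed_at_bigop; rewrite // all_map; apply/allP => r _ /=.
by rewrite closed_pos closed_enc_state cY.
Qed.

Lemma closed_enc F d : closed_at d (enc R F).
Proof.
elim: F d => /= [p|F1 IH1 F2 IH2|F1 IH1 F2 IH2|F IH|F IH|F IH|F IH|F IH|F IH
  |F1 IH1 F2 IH2|F1 IH1 F2 IH2] d;
  rewrite ?IH ?IH1 ?IH2 ?closed_TA ?closed_TE //.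
by apply: closed_at_bigop; rewrite // all_map; apply/allP => i _ /=; case: (p i) => [[]|].
Qed.

Lemma subst_TA d S Y : subst_at d S (TA R Y) = TA R (subst_at d S Y).
Proof.
rewrite /TA (@bigop_ne_morph (subst_at d S) With With) // -map_comp; congr bigop_ne.
apply: eq_map => r /=.
by rewrite !(@subst_at_closed _ _ _ (closed_neg _ _), @subst_at_closed _ _ _ (closed_pos _ _),
  @subst_at_closed _ _ _ (closed_enc_state _ _)).
Qed.

Lemma subst_TE d S Y : subst_at d S (TE R Y) = TE R (subst_at d S Y).
Proof.
rewrite /TE (@bigop_ne_morph (subst_at d S) Plus Plus) // -map_comp; congr bigop_ne.
apply: eq_map => r /=.
by rewrite !(@subst_at_closed _ _ _ (closed_pos _ _),
  @subst_at_closed _ _ _ (closed_enc_state _ _)).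
Qed.

Lemma subst_enc d S F : subst_at d S (enc R F) = enc R F.
Proof. exact/subst_at_closed/closed_enc. Qed.

Lemma provable_lit_dual (s : state n) i : provable [:: lit s i; dual (lit s i)].
Proof. by rewrite /lit; case: (s i); last apply: (pr_ex (perm_swap _ _ _)); apply: pr_init. Qed.

Lemma provable_pos (s : state n) : provable (pos s :: state_ctx s).
Proof.
have := provable_bigTens (fun i _ => provable_lit_dual s i) (l := vars n).
by rewrite /state_ctx -(@flatten_map1 _ _ (fun i => dual (lit s i))).
Qed.

Lemma provable_neg (u s : state n) : u != s -> provable (neg u :: state_ctx s).
Proof.
move=> us; have [i ui] : exists i, u i != s i.
  by apply/existsP; apply: contraR us => /existsPn u_s; apply/eqP/ffunP => i; apply/eqP/negbNE.
have iV : i \in vars n by rewrite mem_enum.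
apply: (provable_bigPlus (f := fun i => Tens (dual (lit u i)) Top) iV) => /=.
have -> : dual (lit u i) = lit s i by rewrite /lit; case: (u i) (s i) ui => -[].
rewrite /state_ctx; case/splitPr: iV => l1 l2; rewrite map_cat /=.
apply: pr_ex (perm_skip _ (Permutation_middle _ _ _)) _.
exact: pr_tens (provable_lit_dual s i) (pr_top _).
Qed.

Lemma provable_enc_state (s : state n) A :
  provable (A :: state_ctx s) -> provable [:: enc_state s; A].
Proof.
move=> As; apply: provable_bigPar.
exact: pr_ex (Permutation_cons_append _ _) As.
Qed.

Lemma provable_TA (s : state n) Y : (forall v, (s, v) \in R -> provable (Y :: state_ctx v)) ->
  provable (TA R Y :: state_ctx s).
Proof.
move=> Y_next; apply: provable_bigWith => -[u v] uv /=.
case: (eqVneq u s) uv => [-> | us] uv; last exact/pr_plus_l/provable_neg.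
apply: pr_plus_r; rewrite -[state_ctx s]cats0.
exact: pr_tens (provable_pos s) (pr_par (provable_enc_state (Y_next v uv))).
Qed.

Lemma provable_TE (s v : state n) Y : (s, v) \in R -> provable (Y :: state_ctx v) ->
  provable (TE R Y :: state_ctx s).
Proof.
move=> sv Yv; apply: (provable_bigPlus (f := fun r : rule n => Tens _ _) sv) => /=.
rewrite -[state_ctx s]cats0.
exact: pr_tens (provable_pos s) (pr_par (provable_enc_state Yv)).
Qed.

Lemma provable_pos_sf (s : state n) p : sat_sf s p -> provable (pos_sf p :: state_ctx s).
Proof.
move=> sp; rewrite /state_ctx -(@flatten_map1 _ _ (fun i => dual (lit s i))).
apply: provable_bigTens => i _; case pi: (p i) => [b|]; last exact: pr_top.
by have := provable_lit_dual s i; rewrite /lit (sp i b pi); case: b pi.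
Qed.


Lemma uniform_bound (T : eqType) (P : nat -> T -> Prop) (l : seq T) :
  (forall k k' x, k <= k' -> P k x -> P k' x) ->
  (forall x, x \in l -> exists k, P k x) -> exists K, forall x, x \in l -> P K x.
Proof.
move=> P_mono; elim: l => [|y l IH] Pl; first by exists 0.
have [K PK] : exists K, forall x, x \in l -> P K x.
  by apply: IH => x xl; apply: Pl; rewrite inE xl orbT.
have [k Pk] := Pl y (mem_head _ _).
exists (maxn K k) => x /predU1P[-> | xl]; first exact: P_mono (leq_maxr _ _) Pk.
exact: P_mono (leq_maxl _ _) (PK x xl).
Qed.

Fixpoint AU_within (P Q : state n -> Prop) (k : nat) (t : state n) : Prop :=
  if k is k'.+1 then Q t \/ (P t /\ forall v, step R t v -> AU_within P Q k' v) else Q t.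

Lemma AU_within_le P Q k k' t : k <= k' -> AU_within P Q k t -> AU_within P Q k' t.
Proof.
elim: k k' t => [|k IH] [|k'] t //= kk'; first by left.
by case=> [Qt | [Pt next]]; [left | right; split=> // v /next; apply: IH].
Qed.

Lemma not_AU_within_next P Q t : (forall k, ~ AU_within P Q k t) ->
  P t -> exists v, step R t v /\ forall k, ~ AU_within P Q k v.
Proof.
move=> nAU Pt; apply: NNPP => n_next.
have [||K AU_K] := @uniform_bound _ (fun k v => step R t v -> AU_within P Q k v) (enum (state n)).
- by move=> k k' v kk' AU_k /AU_k; apply: AU_within_le.
- move=> v _; apply: NNPP => nk; apply: n_next; exists v.
  have [tv | ntv] := boolP ((t, v) \in R); last by case: nk; exists 0 => tv; case/negP: ntv.
  by split=> // k AU_k; apply: nk; exists k.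
by apply: (nAU K.+1); right; split=> // v; apply: AU_K; rewrite mem_enum.
Qed.

(* König's lemma: [R] is finitely branching, so if every path from [s] meets
   [Q] in time, the depth at which it does so is bounded. *)
Lemma AU_within_of_paths P Q s :
  (forall p, is_path R s p -> exists k, Q (p k) /\ forall j, j < k -> P (p j)) ->
  exists k, AU_within P Q k s.
Proof.
move=> AU_s; apply: NNPP => nAU_s.
pose Bad t := forall k, ~ AU_within P Q k t.
have [|p sp Bad_next] := @path_choice _ R (fun t v => Bad t -> P t -> Bad v) s.
  move=> t; have [[Bt Pt] | nBPt] := classic (Bad t /\ P t).
    by have [v [tv Bv]] := not_AU_within_next Bt Pt; exists v.
  have [p tp] := serial_path serialR t.
  by exists (p 1); split; [apply: path_step tp | move=> ? ?; case: nBPt].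
have [k [Qk Pj]] := AU_s p sp.
have Bad_p j : j <= k -> Bad (p j).
  elim: j => [_ | j IHj jk]; first by case: sp => -> _ l ?; apply: nAU_s; exists l.
  by apply: Bad_next (IHj (ltnW jk)) (Pj _ jk).
by apply: (Bad_p k (leqnn k) 0).
Qed.


Definition complete (F : ctl n) :=
  forall t, sat R t F -> provable (enc R F :: state_ctx t).

Lemma complete_AF F : complete F -> complete (CAF F).
Proof.
move=> cF s AF_s; have [k] : exists k, AU_within (fun=> True) (sat R ^~ F) k s.
  by apply: AU_within_of_paths => p /AF_s[k Fk]; exists k.
elim: k s {AF_s} => [|k IHk] s AU_s; apply: pr_mu; rewrite /inst /= subst_TA subst_enc /=.
  exact/pr_plus_l/cF.
case: AU_s => [Fs | [_ AU_next]]; first exact/pr_plus_l/cF.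
by apply/pr_plus_r/provable_TA => v /AU_next /IHk.
Qed.

Lemma complete_AU F1 F2 : complete F1 -> complete F2 -> complete (CAU F1 F2).
Proof.
move=> cF1 cF2 s AU_s; have [k] := @AU_within_of_paths (sat R ^~ F1) (sat R ^~ F2) s AU_s.
elim: k s {AU_s} => [|k IHk] s AU_s; apply: pr_mu; rewrite /inst /= subst_TA !subst_enc /=.
  exact/pr_plus_l/cF2.
case: AU_s => [F2s | [F1s AU_next]]; first exact/pr_plus_l/cF2.
by apply/pr_plus_r/pr_with; [apply: cF1 | apply/provable_TA => v /AU_next /IHk].
Qed.

Lemma complete_EF F : complete F -> complete (CEF F).
Proof.
move=> cF s [p [sp [k Fk]]].
elim: k s p sp Fk => [|k IHk] s p sp Fk; apply: pr_mu; rewrite /inst /= subst_TE subst_enc /=.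
  by apply/pr_plus_l/cF; case: sp Fk => ->.
exact/pr_plus_r/(provable_TE (path_step sp))/(IHk _ _ (path_behead sp)).
Qed.

Lemma complete_EU F1 F2 : complete F1 -> complete F2 -> complete (CEU F1 F2).
Proof.
move=> cF1 cF2 s [p [sp [k [F2k F1j]]]].
elim: k s p sp F2k F1j => [|k IHk] s p sp F2k F1j; apply: pr_mu.
all: rewrite /inst /= subst_TE !subst_enc /=.
  by apply/pr_plus_l/cF2; case: sp F2k => ->.
apply/pr_plus_r/pr_with; first by apply: cF1; case: sp (F1j 0 isT) => ->.
apply/(provable_TE (path_step sp))/(IHk _ _ (path_behead sp) F2k) => j jk; exact: (F1j j.+1 jk).
Qed.

(* Coinduction with the invariant [\bigoplus_(P t) pos t]. *)
Lemma provable_Nu_inv B (P : state n -> Prop) s : P s ->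
  (forall S, (forall t, P t -> provable (S :: state_ctx t)) ->
     forall t, P t -> provable (inst B S :: state_ctx t)) ->
  provable (Nu B :: state_ctx s).
Proof.
move=> Ps B_post; have [L PL] := enum_pred_exists P.
pose S := bigop_ne Plus Zero (map (@pos n) L).
have cS : closed S.
  by apply: closed_at_bigop; rewrite // all_map; apply/allP => t _; apply: closed_pos.
have S_P t : P t -> provable (S :: state_ctx t).
  by move=> /PL tL; apply: provable_bigPlus tL (provable_pos t).
apply: pr_nu cS (S_P s Ps) _; rewrite (@bigop_ne_morph dual Plus With) // -map_comp.
apply: provable_bigWith => t /PL Pt /=; rewrite -enc_state_dual.
exact/provable_enc_state/B_post.
Qed.

Lemma complete_AG F : complete F -> complete (CAG F).
Proof.
move=> cF s AG_s; apply: (@provable_Nu_inv _ (sat R ^~ (CAG F)) _ AG_s) => S S_AG t AG_t.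
rewrite /inst /= subst_TA subst_enc /=; apply: pr_with.
  by have [p tp] := serial_path serialR t; apply: cF; case: tp (AG_t p tp 0) => ->.
by apply: provable_TA => v tv; apply: S_AG => p vp k; apply: AG_t _ (path_cons tv vp) k.+1.
Qed.

Lemma complete_EG F : complete F -> complete (CEG F).
Proof.
move=> cF s EG_s; apply: (@provable_Nu_inv _ (sat R ^~ (CEG F)) _ EG_s) => S S_EG t [p [tp Fp]].
rewrite /inst /= subst_TE subst_enc /=; apply: pr_with.
  by apply: cF; case: tp (Fp 0) => ->.
apply: provable_TE (path_step tp) _; apply: S_EG.
by exists (p \o succn); split=> [|k]; [exact: path_behead tp | exact: Fp].
Qed.

Lemma enc_complete F : complete F.
Proof.
elim: F => [p|F1 IH1 F2 IH2|F1 IH1 F2 IH2|F IH|F IH|F IH|F IH|F IH|F IH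
  |F1 IH1 F2 IH2|F1 IH1 F2 IH2].
- by move=> t; apply: provable_pos_sf.
- by move=> t [F1t F2t]; apply: pr_with; [apply: IH1 | apply: IH2].
- by move=> t [F1t | F2t]; [apply/pr_plus_l/IH1 | apply/pr_plus_r/IH2].
- by move=> t AX_t; apply: provable_TA => v /AX_t /IH.
- by move=> t [v [tv Fv]]; apply: provable_TE tv (IH _ Fv).
- exact: complete_AF.
- exact: complete_EF.
- exact: complete_AG.
- exact: complete_EG.
- exact: complete_AU.
- exact: complete_EU.
Qed.

End Completeness.

Theorem theorem5 (n : nat) (R : seq (rule n)) (F : ctl n) (s : state n) :
  serial R ->
  (sat R s F <-> provable [:: enc_state s; enc R F]).
Proof.
move=> serialR; split=> [/(enc_complete serialR) | sF]; first exact: provable_enc_state.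
have closed_sF : all closed [:: enc_state s; enc R F].
  by rewrite /= /closed closed_enc_state closed_enc.
have /valid_cons := provable_sound (@atom_lits n) (fun _ _ => False) sF closed_sF.
rewrite enc_state_dual interp_dual_closed ?fam_orthK; last exact: closed_pos.
move=> /(_ _ (interp_pos_lits _ _)) /=; rewrite fam_par_botr.
exact: enc_adequate.
Qed.
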